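(* Let $w\in\mathcal W$ and $\rho_c>0$. Let $\gamma_c^\star>0$ be a solution of \[\Psi\big(\widehat\theta_c-\gamma^{-1}\lambda(w,\widehat x_c)\big)+\gamma^{-1}\big\langle\nabla\Psi\big(\widehat\theta_c-\gamma^{-1}\lambda(w,\widehat x_c)\big),\lambda(w,\widehat x_c)\big\rangle=\Psi(\widehat\theta_c)-\rho_c,\] and $\theta_c^\star=\widehat\theta_c-\lambda(w,\widehat x_c)/\gamma_c^\star$. Then the supremum $\sup_{\mathbb Q\in\mathbb B_{Y|\widehat x_c}}\mathbb E_{\mathbb Q}[\ell_\lambda(\widehat x_c,Y,w)]$ is attained by the distribution $\mathbb Q^\star_{Y|\widehat x_c}$ with density $f(\cdot|\theta_c^\star)$.
   Context: Exponential family: $\nu$ a measure on $\mathcal Y\subseteq\mathbb R^m$, $h\ge0$, $T:\mathcal Y\to\mathbb R^p$; $f(y|\theta)=h(y)\exp(\langle\theta,T(y)\rangle-\Psi(\theta))$ density w.r.t. $\nu$; $\Theta=\{\theta\in\mathbb R^p:\int he^{\langle\theta,T\rangle}d\nu<\infty\}$, $\Psi(\theta)=\log\int he^{\langle\theta,T\rangle}d\nu$; regular family ($\Theta$ open, $T_i$ affinely independent). $\mathcal X\subseteq\mathbb R^n$, $\widehat x_c\in\mathcal X$, $\mathcal W$ finite-dimensional, $\lambda:\mathcal W\times\mathcal X\to\Theta$ jointly continuous; $\ell_\lambda(x,y,w)=\Psi(\lambda(w,x))-\langle T(y),\lambda(w,x)\rangle$. $\widehat\theta_c\in\Theta$. KL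 divergence $\mathrm{KL}(\mathbb P_1\|\mathbb P_2)=\mathbb E_{\mathbb P_1}[\log d\mathbb P_1/d\mathbb P_2]$. $\mathbb B_{Y|\widehat x_c}$ is the set of distributions on $\mathcal Y$ with density $f(\cdot|\theta)$ for some $\theta\in\Theta$ satisfying $\mathrm{KL}(f(\cdot|\theta)\|f(\cdot|\widehat\theta_c))\le\rho_c$. *)

From HB Require Import structures.
From mathcomp Require Import all_boot all_order all_algebra.
From mathcomp Require Import all_classical all_reals all_analysis.
Import Order.TTheory GRing.Theory Num.Theory.
Import numFieldNormedType.Exports.
Set Implicit Arguments.
Unset Strict Implicit.
Unset Printing Implicit Defensive.
Local Open Scope classical_set_scope.
Local Open Scope ring_scope.

Definition dotv (R : ringType) (p : nat) (a b : 'rV[R]_p) : R :=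
  \sum_(i < p) a 0 i * b 0 i.

Definition borelRV (R : realType) (m : nat) :=
  g_sigma_algebraType (@open 'rV[R]_m).

Section ExpFam.
Context (R : realType) (m p : nat).
Context (nu : {measure set (borelRV R m) -> \bar R}).
Context (Ys : set (borelRV R m)) (h : borelRV R m -> R)
        (T : borelRV R m -> 'rV[R]_p).

Definition partition_int (theta : 'rV[R]_p) : \bar R :=
  (\int[nu]_(y in Ys) (h y * expR (dotv theta (T y)))%:E)%E.

Definition Theta : set 'rV[R]_p :=
  [set theta | (partition_int theta < +oo)%E].

Definition Psi (theta : 'rV[R]_p) : R := ln (fine (partition_int theta)).

Definition gradPsi (theta : 'rV[R]_p) : 'rV[R]_p :=
  \row_(i < p) derive Psi theta (delta_mx 0 i : 'rV[R]_p).

Definition fdens (theta : 'rV[R]_p) (y : borelRV R m) : R :=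
  h y * expR (dotv theta (T y) - Psi theta).

(* regular family: Theta open and T_1..T_p affinely independent, i.e. no
   nontrivial affine relation <a,T> = c holds (h nu)-almost everywhere *)
Definition regular_family : Prop :=
  open Theta /\
  (forall (a : 'rV[R]_p) (c : R),
      {ae nu, forall y, Ys y -> 0 < h y -> dotv a (T y) = c} ->
      a = 0 /\ c = 0).

Definition KL_fam (theta1 theta2 : 'rV[R]_p) : \bar R :=
  (\int[nu]_(y in Ys)
     (fdens theta1 y * ln (fdens theta1 y / fdens theta2 y))%:E)%E.

Definition E_fam (theta : 'rV[R]_p) (g : borelRV R m -> R) : \bar R :=
  (\int[nu]_(y in Ys) (g y * fdens theta y)%:E)%E.

(* the KL ball B_{Y|xhat}, indexed by the parameters of its members *)
Definition KL_ball (thetahat : 'rV[R]_p) (rho : R) : set 'rV[R]_p :=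
  [set theta | Theta theta /\ (KL_fam theta thetahat <= rho%:E)%E].

Definition loss_lam (k n : nat) (lam : 'rV[R]_k -> 'rV[R]_n -> 'rV[R]_p)
  (x : 'rV[R]_n) (y : borelRV R m) (w : 'rV[R]_k) : R :=
  Psi (lam w x) - dotv (T y) (lam w x).

End ExpFam.

From Pilot Require Import Defs.
From HB Require Import structures.
From mathcomp Require Import all_boot all_order all_algebra.
From mathcomp Require Import all_classical all_reals all_analysis.
From mathcomp Require Import measurable_realfun lra ring.
Import Order.TTheory GRing.Theory Num.Theory.
Import numFieldNormedType.Exports.
Local Open Scope classical_set_scope.
Local Open Scope ring_scope.
Set Implicit Arguments.
Unset Strict Implicit.
Unset Printing Implicit Defensive.

(* The log-partition function [Psi] is convex and its gradient is the mean
   [mean th = E_th[T]] (differentiate under the integral sign; the exponential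
   moments needed for domination exist because [Theta] is open). Hence
   [KL(th || thh) = Psi thh - Psi th + <th - thh, mean th>] and
   [E_th[loss] = Psi l - <l, mean th>] with [l = lam w xhat], and the equation
   defining [gam] says exactly that [ts = thh - l / gam] satisfies
   [KL(ts || thh) = rho]. For [th] in the ball, adding [KL(th || thh) <= rho =
   KL(ts || thh)] to the tangent inequality [Psi th + <ts - th, mean th> <= Psi ts]
   gives [<l, mean ts> <= <l, mean th>]: no member of the ball has a larger
   expected loss than [ts]. *)

Section ExpBounds.
Variable R : realType.

Lemma is_derive_scaled_expR (c x t : R) :
  is_derive t 1 (fun s : R => c * expR (s * x)) (c * (expR (t * x) * x)).
Proof.
have lin : is_derive t 1 (fun s : R => s * x) x.
  by apply: is_derive_eq; rewrite scaler0 add0r; exact: mulr1.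
have := @is_derive1_comp _ expR (fun s => s * x) t _ _ (is_derive_expR (t * x)) lin.
by move=> /(is_deriveZ c).
Qed.

Lemma norm_mul_expR_le (d t x : R) : 0 < d -> `|t| <= d ->
  `|x| * expR (t * x) <= (expR (2 * d * x) + expR (- (2 * d * x))) / d.
Proof.
move=> d0 td.
have expR_norm_le z : expR `|z| <= expR z + expR (- z).
  have [z0|z0] := lerP 0 z; first by rewrite ger0_norm // lerDl expR_ge0.
  by rewrite ltr0_norm // lerDr expR_ge0.
rewrite ler_pdivlMr // mulrC mulrA.
have linear_le_expR : d * `|x| <= expR (d * `|x|).
  by have := expR_ge1Dx (d * `|x|); lra.
have expR_le : expR (t * x) <= expR (d * `|x|).
  by rewrite ler_expR; apply: le_trans (ler_norm _) _; rewrite normrM ler_wpM2r.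
apply: (@le_trans _ _ (expR (d * `|x|) * expR (d * `|x|))).
  by apply: ler_pM; rewrite ?expR_ge0 // mulr_ge0 // ltW.
rewrite -expRD (_ : _ + _ = `|2 * d * x|) //.
by rewrite !normrM (gtr0_norm d0) ger0_norm //; lra.
Qed.
End ExpBounds.

Section DotProduct.
Variables (R : comNzRingType) (p : nat).
Implicit Types a b c : 'rV[R]_p.

Lemma dotvC a b : dotv a b = dotv b a.
Proof. by apply: eq_bigr => i _; rewrite mulrC. Qed.

Lemma dotvDl a b c : dotv (a + b) c = dotv a c + dotv b c.
Proof. by rewrite /dotv -big_split; apply: eq_bigr => i _; rewrite !mxE mulrDl. Qed.

Lemma dotvZl k a b : dotv (k *: a) b = k * dotv a b.
Proof. by rewrite /dotv mulr_sumr; apply: eq_bigr => i _; rewrite !mxE mulrA. Qed.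

Lemma dotvNl a b : dotv (- a) b = - dotv a b.
Proof. by rewrite -scaleN1r dotvZl mulN1r. Qed.

Lemma dotvBl a b c : dotv (a - b) c = dotv a c - dotv b c.
Proof. by rewrite dotvDl dotvNl. Qed.

Lemma dotv0l b : dotv 0 b = 0.
Proof. by rewrite -(scale0r 0) dotvZl mul0r. Qed.

Lemma dotv_deltal (i : 'I_p) b : dotv (delta_mx 0 i) b = b 0 i.
Proof.
rewrite /dotv (bigD1 i) //= big1 ?addr0; first by rewrite mxE !eqxx mul1r.
by move=> j ji; rewrite mxE eqxx /= (negbTE ji) mul0r.
Qed.

End DotProduct.

Section RealIntegrable.
Context d (X : measurableType d) (R : realType) (mu : {measure set X -> \bar R}).
Variables (D : set X) (mD : measurable D).
Local Notation integrableR f := (mu.-integrable D (EFin \o f)).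
Implicit Types f g : X -> R.

Lemma integrableR_add f g : integrableR f -> integrableR g ->
  integrableR (fun x => f x + g x).
Proof.
by move=> intf intg; apply: eq_integrable (integrableD mD intf intg).
Qed.

Lemma integrableR_scalel (k : R) f : integrableR f -> integrableR (fun x => k * f x).
Proof.
by move=> intf; apply: eq_integrable (integrableZl mD k intf).
Qed.

Lemma integrableR_sum (I : Type) (s : seq I) (F : I -> X -> R) :
  (forall i, integrableR (F i)) -> integrableR (fun x => \sum_(i <- s) F i x).
Proof.
move=> intF.
have := @integrable_sum _ _ _ mu D mD _ s xpredT (fun i => EFin \o F i) (fun i _ => intF i).
by apply: eq_integrable => // x _ /=; rewrite sumEFin.
Qed.

Lemma Rintegral_sum (I : Type) (s : seq I) (F : I -> X -> R) :
  (forall i, integrableR (F i)) ->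
  \int[mu]_(x in D) (\sum_(i <- s) F i x) = \sum_(i <- s) \int[mu]_(x in D) F i x.
Proof.
move=> intF; elim: s => [|i s IHs].
  by rewrite big_nil; under eq_Rintegral do rewrite big_nil; rewrite /Rintegral integral0.
under eq_Rintegral do rewrite big_cons.
by rewrite RintegralD // ?IHs ?big_cons //; exact: integrableR_sum.
Qed.

Lemma integral_EFin f : integrableR f ->
  (\int[mu]_(x in D) (f x)%:E)%E = (\int[mu]_(x in D) f x)%:E.
Proof. by move=> intf; rewrite /Rintegral fineK //; exact: integrable_fin_num. Qed.

End RealIntegrable.

Lemma derive_along_line (R : realType) (V W : normedModType R) (f : V -> W) (x v : V) :
  derive f x v = derive (fun t : R => f (t *: v + x)) 0 1.
Proof.
rewrite /derive; suff -> : (fun t : R => t^-1 *: ((f \o shift x) (t *: v) - f x)) =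
  (fun t : R => t^-1 *: (((fun s : R => f (s *: v + x)) \o shift 0) (t *: 1) - f (0 *: v + x))) by [].
apply/funext => t /=.
by rewrite scale0r add0r addr0 [t%:A]mulr1.
Qed.

Section ExponentialFamily.
Variables (R : realType) (m p : nat).
Variable nu : {measure set (borelRV R m) -> \bar R}.
Variables (Ys : set (borelRV R m)) (mYs : measurable Ys).
Variables (h : borelRV R m -> R) (T : borelRV R m -> 'rV[R]_p).
Hypotheses (mh : measurable_fun Ys h) (h_ge0 : forall y, Ys y -> 0 <= h y).
Hypothesis mT : forall i : 'I_p, measurable_fun Ys (fun y => T y 0 i).
Hypothesis Hreg : regular_family nu Ys h T.

Local Notation Theta := (Theta nu Ys h T).
Local Notation Psi := (Psi nu Ys h T).
Local Notation fdens := (fdens nu Ys h T).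
Local Notation E_fam := (E_fam nu Ys h T).
Local Notation KL_fam := (KL_fam nu Ys h T).
Local Notation integrableR f := (nu.-integrable Ys (EFin \o f)).

Definition weight (th : 'rV[R]_p) (y : borelRV R m) : R := h y * expR (dotv th (T y)).

Definition partition (th : 'rV[R]_p) : R := \int[nu]_(y in Ys) weight th y.

Definition moment (th : 'rV[R]_p) : 'rV[R]_p :=
  \row_i \int[nu]_(y in Ys) (T y 0 i * weight th y).

Definition mean (th : 'rV[R]_p) : 'rV[R]_p := (partition th)^-1 *: moment th.

Lemma PsiE th : Psi th = ln (partition th).
Proof. by []. Qed.

Lemma measurable_dotvT a : measurable_fun Ys (fun y => dotv a (T y)).
Proof.
apply: measurable_sum => i.
by apply: measurable_funM => //; exact: measurable_cst.
Qed.

Lemma measurable_weight th : measurable_fun Ys (weight th).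
Proof.
apply: measurable_funM => //.
by apply: measurableT_comp; [exact: measurable_expR | exact: measurable_dotvT].
Qed.

Lemma weight_ge0 th y : Ys y -> 0 <= weight th y.
Proof. by move=> Yy; rewrite mulr_ge0 ?expR_ge0 ?h_ge0. Qed.

Lemma weight_shift th (i : 'I_p) s y :
  weight (s *: 'e_i + th) y = weight th y * expR (s * T y 0 i).
Proof. by rewrite /weight dotvDl dotvZl dotv_deltal expRD; ring. Qed.

Lemma integrable_weight th : Theta th -> integrableR (weight th).
Proof.
move=> Th; apply/integrableP; split; first by apply/measurable_EFinP; exact: measurable_weight.
rewrite (eq_integral (fun y => (weight th y)%:E)) //.
by move=> y /set_mem Yy /=; rewrite ger0_norm // weight_ge0.
Qed.

(* Regularity excludes [h = 0] nu-a.e. on [Ys] (take [a = 0], [c = 1]). *)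
Lemma partition_gt0 th : Theta th -> 0 < partition th.
Proof.
move=> Th; rewrite lt_neqAle Rintegral_ge0 ?andbT; last exact: weight_ge0.
apply/negP => /eqP Z0.
have normw0 : (\int[nu]_(y in Ys) `|(weight th y)%:E| = 0)%E.
  rewrite (eq_integral (fun y => (weight th y)%:E)).
    by rewrite integral_EFin ?integrable_weight // -[Rintegral _ _ _]/(partition th) -Z0.
  by move=> y /set_mem Yy /=; rewrite ger0_norm // weight_ge0.
have mw : measurable_fun Ys (EFin \o weight th).
  by apply/measurable_EFinP; exact: measurable_weight.
have /(ae_eq_integral_abs nu mYs mw) w0 := normw0.
have absurd : {ae nu, forall y, Ys y -> 0 < h y -> dotv 0 (T y) = 1}.
  apply: filterS w0 => y w0y Yy hy; exfalso; move: (w0y Yy) => /= [] /eqP.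
  by rewrite /weight mulf_eq0 (gt_eqF hy) (gt_eqF (expR_gt0 _)).
by have [_ /eqP] := Hreg.2 0 1 absurd; rewrite oner_eq0.
Qed.

Lemma fdensE th y : Theta th -> fdens th y = weight th y / partition th.
Proof.
move=> Th; rewrite /Defs.fdens PsiE expRD expRN lnK ?mulrA //.
by rewrite posrE partition_gt0.
Qed.

Lemma fdens_ge0 th y : Ys y -> 0 <= fdens th y.
Proof. by move=> Yy; rewrite /Defs.fdens mulr_ge0 ?expR_ge0 ?h_ge0. Qed.

Lemma Theta_line th (i : 'I_p) : Theta th ->
  exists2 r, 0 < r & forall s, `|s| < r -> Theta (s *: 'e_i + th).
Proof.
move=> Th; have : nbhs th Theta by move: Hreg.1; rewrite openE => /(_ _ Th).
move=> /nbhs_normP [r r0 ball_r].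
have ei0 : 0 < `|'e_i : 'rV[R]_p|.
  rewrite normr_gt0; apply/eqP => /matrixP /(_ 0 i); rewrite !mxE !eqxx /=.
  by move/eqP; rewrite oner_eq0.
exists (r / `|'e_i : 'rV[R]_p|); first by rewrite divr_gt0.
move=> s sr; apply: ball_r => /=.
by rewrite opprD addrC -addrA addNr addr0 normrN normrZ -ltr_pdivlMr.
Qed.

(* Dominates [|T_i| * weight (t *: 'e_i + th)] for [|t| <= d] because
   [|x| e^(t x) <= (e^(2 d x) + e^(-2 d x)) / d]; it is integrable once
   [th +- 2 d 'e_i] lie in the open set [Theta]. *)
Definition envelope th (i : 'I_p) (d : R) (y : borelRV R m) : R :=
  `|weight ((2 * d) *: 'e_i + th) y + weight (- (2 * d) *: 'e_i + th) y| / d.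

Lemma envelope_ge0 th i d y : 0 < d -> 0 <= envelope th i d y.
Proof. by move=> d0; exact: divr_ge0 (normr_ge0 _) (ltW d0). Qed.

Lemma le_envelope th i d t y : 0 < d -> `|t| <= d -> Ys y ->
  `|T y 0 i| * weight (t *: 'e_i + th) y <= envelope th i d y.
Proof.
move=> d0 td Yy.
rewrite /envelope (ger0_norm (addr_ge0 (weight_ge0 _ Yy) (weight_ge0 _ Yy))).
rewrite !weight_shift -mulrDr mulrCA -[_ * _ / d]mulrA ler_wpM2l ?weight_ge0 //.
by rewrite mulNr; exact: norm_mul_expR_le.
Qed.

Lemma integrable_envelope th i d : 0 < d ->
  Theta ((2 * d) *: 'e_i + th) -> Theta (- (2 * d) *: 'e_i + th) ->
  integrableR (envelope th i d).
Proof.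
move=> d0 Thp Thn.
have := integrableR_scalel mYs d^-1 (integrableR_add mYs
  (integrable_weight Thp) (integrable_weight Thn)).
apply: eq_integrable => // y /set_mem Yy /=.
by rewrite /envelope ger0_norm ?addr_ge0 ?weight_ge0 // mulrC.
Qed.

Lemma dominated_line th (i : 'I_p) : Theta th -> exists2 d, 0 < d &
  (forall t, `|t| <= d -> Theta (t *: 'e_i + th)) /\
  integrableR (envelope th i d).
Proof.
move=> Th; have [r r0 ball_r] := Theta_line i Th.
have d0 : 0 < r / 4 by rewrite divr_gt0.
have in_ball t : `|t| <= 2 * (r / 4) -> Theta (t *: 'e_i + th).
  by move=> td; apply: ball_r; apply: le_lt_trans td _; lra.
exists (r / 4); first exact: d0.
split=> [t td|].
  by apply: in_ball; apply: le_trans td _; lra.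
have le2d : `|2 * (r / 4)| <= 2 * (r / 4) by rewrite ger0_norm // ltW // mulr_gt0.
by apply: (integrable_envelope d0); apply: in_ball; rewrite ?normrN.
Qed.

Lemma integrable_moment th (i : 'I_p) : Theta th ->
  integrableR (fun y => T y 0 i * weight th y).
Proof.
move=> Th; have [d d0 [_ intG]] := dominated_line i Th.
apply: le_integrable intG => //.
  by apply/measurable_EFinP; apply: measurable_funM => //; exact: measurable_weight.
move=> y Yy /=; rewrite lee_fin normrM (ger0_norm (weight_ge0 _ Yy)).
rewrite (ger0_norm (envelope_ge0 _ _ _ d0)).
have le0d : `|0 : R| <= d by rewrite normr0 ltW.
have := le_envelope th i d0 le0d Yy.
by rewrite scale0r add0r.
Qed.

Lemma is_derive_partition_line th (i : 'I_p) : Theta th ->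
  is_derive (0 : R) 1 (fun t : R => partition (t *: 'e_i + th)) (moment th 0 i).
Proof.
move=> Th; have [d d0 [Th_line intG]] := dominated_line i Th.
pose f t y := weight (t *: 'e_i + th) y.
have I0 : `]-d, d[%classic (0 : R) by rewrite /= in_itv /= oppr_lt0 d0.
have le_d (t : R) : `]-d, d[%classic t -> `|t| <= d.
  by rewrite /= in_itv /= ler_norml => /andP[/ltW -> /ltW ->].
have intf (t : R) : `]-d, d[%classic t -> integrableR (f t).
  by move=> /le_d/Th_line; exact: integrable_weight.
have df (t : R) y : is_derive t 1 (f ^~ y) (weight th y * (expR (t * T y 0 i) * T y 0 i)).
  have -> : f ^~ y = fun s => weight th y * expR (s * T y 0 i).
    by apply/funext => s; rewrite /f weight_shift.
  exact: is_derive_scaled_expR.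
have derf (t : R) y : `]-d, d[%classic t -> Ys y -> derivable (f ^~ y) t 1.
  by move=> _ _; have [] := df t y.
have d1f (t : R) y : partial1of2 f t y = weight th y * (expR (t * T y 0 i) * T y 0 i).
  by rewrite partial1of2E; have [_ ->] := df t y.
have f_ub (t : R) y : `]-d, d[%classic t -> Ys y -> `|partial1of2 f t y| <= envelope th i d y.
  move=> It Yy; apply: le_trans (le_envelope th i d0 (le_d t It) Yy).
  rewrite d1f weight_shift normrM (ger0_norm (weight_ge0 _ Yy)) normrM.
  by rewrite (ger0_norm (expR_ge0 _)) [in X in _ <= X]mulrCA [_ * `|_|]mulrC.
have G_ge0 y : 0 <= envelope th i d y by exact: envelope_ge0.
have dF := derivable_under_integral mYs I0 intf derf G_ge0 intG f_ub.
apply: DeriveDef; first exact: dF.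
rewrite -derive1E (differentiation_under_integral mYs I0 intf derf G_ge0 intG f_ub) mxE.
by apply: eq_Rintegral => y _; rewrite d1f mul0r expR0 mul1r mulrC.
Qed.

Lemma gradPsi_mean th : Theta th -> gradPsi nu Ys h T th = mean th.
Proof.
move=> Th; apply/rowP => i; rewrite !mxE derive_along_line.
have Z0 : 0 < partition (0 *: 'e_i + th) by rewrite scale0r add0r partition_gt0.
have [_ ->] := is_derive1_comp (is_derive1_ln Z0) (is_derive_partition_line i Th).
by rewrite scale0r add0r mxE.
Qed.

Lemma dotv_weightE a th y :
  dotv a (T y) * weight th y = \sum_(j < p) a 0 j * (T y 0 j * weight th y).
Proof. by rewrite /dotv mulr_suml; apply: eq_bigr => j _; rewrite -mulrA. Qed.

Lemma integrable_dotv_weight a th : Theta th ->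
  integrableR (fun y => dotv a (T y) * weight th y).
Proof.
move=> Th; have := integrableR_sum mYs (index_enum 'I_p)
  (fun j => integrableR_scalel mYs (a 0 j) (integrable_moment j Th)).
by apply: eq_integrable => // y _ /=; rewrite dotv_weightE.
Qed.

Lemma Rintegral_dotv_weight a th : Theta th ->
  \int[nu]_(y in Ys) (dotv a (T y) * weight th y) = dotv a (moment th).
Proof.
move=> Th; under eq_Rintegral do rewrite dotv_weightE.
rewrite Rintegral_sum //; last first.
  by move=> j; exact: (integrableR_scalel mYs (a 0 j) (integrable_moment j Th)).
by apply: eq_bigr => j _; rewrite RintegralZl ?integrable_moment // mxE.
Qed.

Lemma affine_fdensE th a c y : Theta th ->
  (c + dotv a (T y)) * fdens th y =
  (partition th)^-1 * (c * weight th y + dotv a (T y) * weight th y).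
Proof. by move=> Th; rewrite fdensE //; ring. Qed.

Lemma integrable_affine_fdens th a c : Theta th ->
  integrableR (fun y => (c + dotv a (T y)) * fdens th y).
Proof.
move=> Th; have := integrableR_scalel mYs (partition th)^-1 (integrableR_add mYs
  (integrableR_scalel mYs c (integrable_weight Th)) (integrable_dotv_weight a Th)).
by apply: eq_integrable => // y _ /=; rewrite affine_fdensE.
Qed.

Lemma E_fam_affine th a c : Theta th ->
  E_fam th (fun y => c + dotv a (T y)) = (c + dotv a (mean th))%:E.
Proof.
move=> Th; rewrite /Defs.E_fam integral_EFin ?integrable_affine_fdens //.
congr EFin; under eq_Rintegral do rewrite affine_fdensE //.
have intw := integrable_weight Th; have intcw := integrableR_scalel mYs c intw.
have intaw := integrable_dotv_weight a Th.
rewrite RintegralZl ?RintegralD ?RintegralZl ?Rintegral_dotv_weight //; last first.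
  exact: integrableR_add.
rewrite [dotv a (mean th)]dotvC dotvZl [dotv (moment th) a]dotvC -/(partition th).
by rewrite mulrDr mulrCA mulVf ?mulr1 // gt_eqF // partition_gt0.
Qed.

(* Below, [Psi] and [mean] are abstracted before calling [ring] or [lra]: left
   as they are, these tactics try to unfold the underlying integrals. *)
Lemma fdens_change th th' y :
  fdens th' y = expR (Psi th - Psi th' + dotv (th' - th) (T y)) * fdens th y.
Proof.
rewrite /Defs.fdens mulrCA -expRD dotvBl; congr (_ * expR _).
by move: (Psi th) (Psi th') (dotv th (T y)) (dotv th' (T y)) => P P' a a'; ring.
Qed.

Lemma Psi_tangent_le th th' : Theta th -> Theta th' ->
  Psi th + dotv (th' - th) (mean th) <= Psi th'.
Proof.
move=> Th Th'; set c := 1 + Psi th - Psi th'.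
have : (E_fam th (fun y => c + dotv (th' - th) (T y))%R <=
        E_fam th' (fun y => 1 + dotv 0 (T y))%R)%E.
  apply: (le_integral mYs (integrable_affine_fdens _ _ Th) (integrable_affine_fdens _ _ Th')).
  move=> y /set_mem Yy; rewrite lee_fin dotv0l addr0 mul1r (fdens_change th th').
  rewrite ler_wpM2r ?fdens_ge0 //.
  by rewrite /c -!addrA expR_ge1Dx.
rewrite (E_fam_affine _ _ Th) (E_fam_affine _ _ Th') dotv0l addr0 lee_fin /c.
by move: (Psi th) (Psi th') (dotv _ _) => P P' u; lra.
Qed.

Lemma fdens_mul_log_ratio th thh y : Ys y ->
  fdens th y * ln (fdens th y / fdens thh y) =
  (Psi thh - Psi th + dotv (th - thh) (T y)) * fdens th y.
Proof.
move=> Yy; have [h0|hpos] := eqVneq (h y) 0.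
  have -> : fdens th y = 0 by rewrite /Defs.fdens h0 mul0r.
  by rewrite mul0r mulr0.
have fdens_gt0 th' : 0 < fdens th' y.
  by rewrite /Defs.fdens mulr_gt0 ?expR_gt0 // lt_neqAle eq_sym hpos h_ge0.
by rewrite [in X in ln X](fdens_change thh th) mulfK ?gt_eqF // expRK mulrC.
Qed.

Lemma KL_famE th thh : Theta th ->
  KL_fam th thh = (Psi thh - Psi th + dotv (th - thh) (mean th))%:E.
Proof.
move=> Th; rewrite -E_fam_affine //; apply: eq_integral => y /set_mem Yy.
by rewrite fdens_mul_log_ratio.
Qed.

Lemma E_fam_lossE (n k : nat) (lam : 'rV[R]_k -> 'rV[R]_n -> 'rV[R]_p) x w th :
  Theta th -> E_fam th (fun y => loss_lam nu Ys h T lam x y w) =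
  (Psi (lam w x) - dotv (lam w x) (mean th))%:E.
Proof.
move=> Th; rewrite -dotvNl -E_fam_affine //; apply: eq_integral => y _.
by rewrite /loss_lam dotvNl dotvC.
Qed.

Lemma KL_fam_solution thh l (g rho : R) : Theta (thh - g *: l) ->
  Psi (thh - g *: l) + g * dotv (gradPsi nu Ys h T (thh - g *: l)) l = Psi thh - rho ->
  KL_fam (thh - g *: l) thh = rho%:E.
Proof.
move=> Ts; rewrite gradPsi_mean // => sol; rewrite (KL_famE thh Ts); congr EFin.
rewrite (_ : thh - g *: l - thh = - (g *: l)); last by rewrite addrAC subrr add0r.
rewrite dotvNl dotvZl dotvC; move: sol.
by move: (Psi (thh - g *: l)) (Psi thh) (g * _) => P P' u; lra.
Qed.

Lemma dotv_mean_le_KL_ball thh l (g rho : R) th : 0 < g ->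
  Theta (thh - g *: l) -> KL_fam (thh - g *: l) thh = rho%:E ->
  KL_ball nu Ys h T thh rho th ->
  dotv l (mean (thh - g *: l)) <= dotv l (mean th).
Proof.
move=> g0 Ts KLs [Th]; rewrite -KLs (KL_famE thh Th) (KL_famE thh Ts) lee_fin => KLth.
have {KLs KLth} := lerD KLth (Psi_tangent_le Th Ts).
move: (Psi thh) (Psi th) (Psi (thh - g *: l)) (mean th) (mean (thh - g *: l)).
move=> a b c mu mus.
have -> : thh - g *: l - thh = - g *: l by rewrite scaleNr addrAC subrr add0r.
have -> : thh - g *: l - th = - g *: l - (th - thh).
  by rewrite scaleNr opprB addrCA addrA.
rewrite !dotvBl !dotvZl => sum_le.
rewrite -(ler_pM2l g0) -lerN2 -!mulNr.
lra.
Qed.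

End ExponentialFamily.

Unset Implicit Arguments.
Set Strict Implicit.

Theorem propositionC3 (R : realType) (m p n k : nat)
  (nu : {measure set (borelRV R m) -> \bar R})
  (Ys : set (borelRV R m)) (mYs : measurable Ys)
  (h : borelRV R m -> R) (T : borelRV R m -> 'rV[R]_p)
  (mh : measurable_fun Ys h) (h_ge0 : forall y, Ys y -> 0 <= h y)
  (mT : forall i : 'I_p, measurable_fun Ys (fun y => T y 0 i))
  (Hreg : regular_family nu Ys h T)
  (Xs : set 'rV[R]_n) (xhat : 'rV[R]_n) (Hxhat : Xs xhat)
  (Ws : set 'rV[R]_k)
  (lam : 'rV[R]_k -> 'rV[R]_n -> 'rV[R]_p)
  (lam_cont : {within Ws `*` Xs, continuous (fun z => lam z.1 z.2)})
  (lam_Theta : forall w x, Ws w -> Xs x -> Theta nu Ys h T (lam w x))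
  (thetahat : 'rV[R]_p) (Hthetahat : Theta nu Ys h T thetahat)
  (w : 'rV[R]_k) (Hw : Ws w) (rho : R) (Hrho : 0 < rho)
  (gam : R) (Hgam : 0 < gam)
  (Hsol_dom : Theta nu Ys h T (thetahat - gam^-1 *: lam w xhat))
  (Hsol : Psi nu Ys h T (thetahat - gam^-1 *: lam w xhat)
          + gam^-1 * dotv (gradPsi nu Ys h T (thetahat - gam^-1 *: lam w xhat))
                          (lam w xhat)
          = Psi nu Ys h T thetahat - rho) :
  let thetastar := thetahat - gam^-1 *: lam w xhat in
  KL_ball nu Ys h T thetahat rho thetastar /\
  E_fam nu Ys h T thetastar (fun y => loss_lam nu Ys h T lam xhat y w)
  = ereal_sup [set E_fam nu Ys h T theta (fun y => loss_lam nu Ys h T lam xhat y w)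
              | theta in KL_ball nu Ys h T thetahat rho].
Proof.
move=> ts.
have KLts := KL_fam_solution mYs mh h_ge0 mT Hreg Hsol_dom Hsol.
have ball_ts : KL_ball nu Ys h T thetahat rho ts by split; rewrite // KLts.
split=> //; apply/eqP; rewrite eq_le; apply/andP; split.
  by apply: ereal_sup_ubound; exists ts.
apply: ge_ereal_sup => _ [th ball_th <-].
rewrite (E_fam_lossE mYs mh h_ge0 mT Hreg _ _ _ ball_th.1).
rewrite (E_fam_lossE mYs mh h_ge0 mT Hreg _ _ _ Hsol_dom).
rewrite lee_fin lerD2l lerN2.
have gam_inv_gt0 : 0 < gam^-1 by rewrite invr_gt0.
exact (dotv_mean_le_KL_ball mYs mh h_ge0 mT Hreg gam_inv_gt0 Hsol_dom KLts ball_th).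
Qed.
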